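(* Let $\kappa$ be a cardinal. A liner $X$ is $\kappa$-ranked if and only if it has the $\kappa$-Exchange Property. In particular, a liner is ranked if and only if it has the Exchange Property.
   Context: A liner is a set $X$ of points with a family $\mathcal L$ of subsets called lines such that any two distinct points lie in a unique line and every line contains at least two points. For distinct $x,y$, $\overline{xy}$ is the line containing $x,y$; $\overline{xx}:=\{x\}$. A set $A\subseteq X$ is flat if $\overline{xy}\subseteq A$ for all distinct $x,y\in A$; the flat hull $\overline A$ is the smallest flat containing $A$. The rank $\|A\|$ of $A\subseteq X$ is the smallest cardinality $|B|$ of a set $B\subseteq X$ with $A\subseteq\overline B$. A liner is $\kappa$-ranked if any two flats $A\subseteq B\subseteq X$ of equal finite rank $\|A\|=\|B\|\le\kappa$ are equal; it is ranked if it is $\kappa$-ranked for every cardinal $\kappa$ (equivalently, any flats $A\subseteq B$ of equal finite rank coincide). A liner has the $\kappa$-Exchange Property if for every set $A\subseteq X$ with $|A|<\kappa$ and all points $x\in X$, $y\in\overline{A\cup\{x\}}\setminus\overline A$, we have $x\in\overline{A\cup\{y\}}$. It has the Exchange Property if for every flat $A$ and points $x\in X\setminus A$, $y\in\overline{A\cup\{x\}}\setminus A$, we have $x\in\overline{A\cup\{y\}}$. *)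

From Stdlib Require Import List Arith.

Set Implicit Arguments.

Section Liner.
Variable X : Type.
Variable L : (X -> Prop) -> Prop.

Definition is_liner : Prop :=
  (forall x y : X, x <> y ->
     exists l, L l /\ l x /\ l y /\
       forall l', L l' -> l' x -> l' y -> forall z, l' z <-> l z) /\
  (forall l, L l -> exists x y : X, x <> y /\ l x /\ l y).

Definition flat (A : X -> Prop) : Prop :=
  forall l, L l -> forall x y, x <> y -> l x -> l y -> A x -> A y ->
    forall z, l z -> A z.

Definition hull (A : X -> Prop) : X -> Prop :=
  fun z => forall F, flat F -> (forall a, A a -> F a) -> F z.

Definition subset (A B : X -> Prop) : Prop := forall x, A x -> B x.
Definition set_eq (A B : X -> Prop) : Prop := forall x, A x <-> B x.
Definition setU1 (A : X -> Prop) (x : X) : X -> Prop := fun z => A z \/ z = x.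

(* Finite sets B are represented by lists (duplicates only increase
   the length, so the minimum is the minimal cardinality). *)
Definition rank_eq (A : X -> Prop) (n : nat) : Prop :=
  (exists B : list X, length B = n /\ subset A (hull (fun z => In z B))) /\
  (forall B : list X, subset A (hull (fun z => In z B)) -> n <= length B).

(* Cardinals: a cardinal kappa is represented as the cardinality of a type K.
   |A| < kappa : there is an injection A -> K but no injection K -> A. *)
Definition card_lt (A : X -> Prop) (K : Type) : Prop :=
  (exists f : {x : X | A x} -> K, forall u v, f u = f v -> u = v) /\
  ~ (exists g : K -> {x : X | A x}, forall u v, g u = g v -> u = v).

End Liner.

Definition nat_le_card (n : nat) (K : Type) : Prop :=
  exists f : {i : nat | i < n} -> K, forall u v, f u = f v -> u = v.

Definition kappa_ranked (X : Type) (L : (X -> Prop) -> Prop) (K : Type) : Prop :=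
  forall (A B : X -> Prop) (n : nat),
    flat L A -> flat L B -> subset A B ->
    rank_eq L A n -> rank_eq L B n -> nat_le_card n K ->
    set_eq A B.

Definition ranked (X : Type) (L : (X -> Prop) -> Prop) : Prop :=
  forall (A B : X -> Prop) (n : nat),
    flat L A -> flat L B -> subset A B ->
    rank_eq L A n -> rank_eq L B n ->
    set_eq A B.

Definition kappa_exchange (X : Type) (L : (X -> Prop) -> Prop) (K : Type) : Prop :=
  forall (A : X -> Prop) (x y : X),
    card_lt A K ->
    hull L (setU1 A x) y -> ~ hull L A y ->
    hull L (setU1 A y) x.

Definition exchange (X : Type) (L : (X -> Prop) -> Prop) : Prop :=
  forall (A : X -> Prop) (x y : X),
    flat L A -> ~ A x ->
    hull L (setU1 A x) y -> ~ A y ->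
    hull L (setU1 A y) x.

From Stdlib Require Import List Arith Lia Wf_nat FinFun Classical ClassicalEpsilon.
Import ListNotations.

(* Both properties reduce to finite configurations, since hulls are finitary.
   If flats of equal rank coincide, then for y in <F + x> but not in <F> the
   ranks of <F> < <F + y> <= <F + x> grow by at most one, so <F + y> = <F + x>
   and x lies in <F + y>.  Conversely, exchange yields the Steinitz exchange
   lemma: an independent list inside the span of a list C is no longer than C.
   For flats A <= B of rank n, a maximal independent list in A spans A and so
   has length n; a point of B outside A would extend it to an independent list
   of length n + 1 inside B, which is spanned by n points. *)

(** * Cardinals *)

Lemma sig_inj {A} (P : A -> Prop) : Injective (@proj1_sig A P).
Proof. exact (eq_sig_hprop (fun x => proof_irrelevance (P x))). Qed.

Lemma injective_inverse_of_surjective {U V} (f : U -> V) :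
  Surjective f -> exists g : V -> U, Injective g.
Proof.
  intros Hf. exists (fun v => proj1_sig (constructive_indefinite_description _ (Hf v))).
  intros v w E.
  destruct (constructive_indefinite_description _ (Hf v)) as [u Hu].
  destruct (constructive_indefinite_description _ (Hf w)) as [u' Hu'].
  simpl in E. subst. reflexivity.
Qed.

Lemma list_lift_sig {A} (P : A -> Prop) (l : list A) :
  (forall a, In a l -> P a) -> exists l' : list {a | P a}, map (@proj1_sig _ _) l' = l.
Proof.
  induction l as [|a l IH]; intros Hl.
  - exists []. reflexivity.
  - destruct IH as [l' E]; [intros b Hb; apply Hl; right; exact Hb|].
    exists (exist _ a (Hl a (or_introl eq_refl)) :: l'). simpl. now rewrite E.
Qed.

Lemma list_sig_index {X} (l : list X) :
  exists f : {x | In x l} -> {i | i < length l}, Injective f.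
Proof.
  assert (Hex : forall u : {x | In x l}, exists i : {i | i < length l},
             nth (proj1_sig i) l (proj1_sig u) = proj1_sig u).
  { intros [x Hx]. destruct (In_nth l x x Hx) as [i [Hi E]]. exists (exist _ i Hi). exact E. }
  exists (fun u => proj1_sig (constructive_indefinite_description _ (Hex u))).
  intros u v E.
  destruct (constructive_indefinite_description _ (Hex u)) as [i Hu].
  destruct (constructive_indefinite_description _ (Hex v)) as [j Hv].
  simpl in E. subst j. apply sig_inj. rewrite <- Hu, <- Hv. apply nth_indep, proj2_sig.
Qed.

Lemma fin_injection_length {X} n (l : list X) (f : {i | i < n} -> X) :
  Injective f -> (forall i, In (f i) l) -> n <= length l.
Proof.
  intros Hf Hl.
  set (F i := match lt_dec i n with left p => Some (f (exist _ i p)) | right _ => None end).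
  rewrite <- (length_seq n 0), <- (length_map F), <- (length_map Some l).
  apply NoDup_incl_length.
  - apply NoDup_map_NoDup_ForallPairs; [|apply seq_NoDup].
    intros i j Hi Hj. apply in_seq in Hi, Hj. unfold F.
    destruct (lt_dec i n) as [pi|]; [|lia]. destruct (lt_dec j n) as [pj|]; [|lia].
    intros E. injection E as E. exact (f_equal (@proj1_sig _ _) (Hf _ _ E)).
  - intros z Hz. apply in_map_iff in Hz as [i [<- Hi]]. apply in_seq in Hi. unfold F.
    destruct (lt_dec i n); [|lia]. apply in_map, Hl.
Qed.

Lemma nat_le_card_mono K m n : m <= n -> nat_le_card n K -> nat_le_card m K.
Proof.
  intros Hmn [g Hg].
  exists (fun i : {i | i < m} =>
            g (exist _ (proj1_sig i) (Nat.lt_le_trans _ _ _ (proj2_sig i) Hmn))).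
  intros u v E. apply sig_inj. exact (f_equal (@proj1_sig _ _) (Hg _ _ E)).
Qed.

Lemma nat_le_card_NoDup K (l : list K) : NoDup l -> nat_le_card (length l) K.
Proof.
  destruct l as [|k l]; intros Hl.
  - exists (fun i => False_rect K (Nat.nlt_0_r _ (proj2_sig i))).
    intros [i Hi]. simpl in Hi. lia.
  - exists (fun i => nth (proj1_sig i) (k :: l) k).
    intros [i Hi] [j Hj] E. apply sig_inj. exact (proj1 (NoDup_nth _ k) Hl i j Hi Hj E).
Qed.

(* If the image of [F] exhausted [K], then [K] would inject into [A]. *)
Lemma nat_le_card_of_card_lt {X K} (A : X -> Prop) (F : list X) :
  card_lt A K -> NoDup F -> (forall a, In a F -> A a) -> nat_le_card (S (length F)) K.
Proof.
  intros [[f Hf] Hno] HF HFA.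
  destruct (list_lift_sig A F HFA) as [F' <-].
  assert (Himg : NoDup (map f F')).
  { exact (Injective_map_NoDup (f := f) Hf (NoDup_map_inv (@proj1_sig _ _) _ HF)). }
  destruct (classic (exists k, ~ In k (map f F'))) as [[k Hk]|Hall].
  - replace (S (length (map (@proj1_sig _ _) F'))) with (length (k :: map f F'))
      by (simpl; now rewrite !length_map).
    apply nat_le_card_NoDup. constructor; assumption.
  - exfalso. apply Hno, (injective_inverse_of_surjective f). intros k.
    apply NNPP. intros Hk. apply Hall. exists k. intros Hin.
    apply in_map_iff in Hin as [u [Hu _]]. eauto.
Qed.

Lemma card_lt_list {X K} (l : list X) n :
  nat_le_card n K -> length l < n -> card_lt (fun z => In z l) K.
Proof.
  intros [g Hg] Hlen. split.
  - destruct (list_sig_index l) as [f Hf].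
    exists (fun u =>
              g (exist _ (proj1_sig (f u)) (Nat.lt_trans _ _ _ (proj2_sig (f u)) Hlen))).
    intros u v E. apply Hf, sig_inj. exact (f_equal (@proj1_sig _ _) (Hg _ _ E)).
  - intros [h Hh]. enough (n <= length l) by lia.
    apply (fin_injection_length n l (fun i => proj1_sig (h (g i)))).
    + intros u v E. apply Hg, Hh, sig_inj, E.
    + intros i. exact (proj2_sig (h (g i))).
Qed.

(** * Hulls and ranks *)

Lemma least_nat (P : nat -> Prop) :
  (exists n, P n) -> exists n, P n /\ forall k, P k -> n <= k.
Proof.
  intros Hex.
  destruct (dec_inh_nat_subset_has_unique_least_element P (fun n => classic (P n)) Hex)
    as [n [Hn _]].
  exists n. exact Hn.
Qed.

Lemma greatest_nat (P : nat -> Prop) N :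
  (exists n, P n) -> (forall k, P k -> k <= N) -> exists n, P n /\ forall k, P k -> k <= n.
Proof.
  intros [n0 Hn0] Hbound.
  destruct (least_nat (fun d => exists n, P n /\ d = N - n)) as [d [[n [Hn ->]] Hleast]].
  { exists (N - n0), n0. auto. }
  exists n. split; [exact Hn|]. intros k Hk.
  specialize (Hleast (N - k) (ex_intro _ k (conj Hk eq_refl))).
  pose proof (Hbound k Hk). pose proof (Hbound n Hn). lia.
Qed.

Section Liner.
Context {X : Type} (L : (X -> Prop) -> Prop).

Local Notation span l := (hull L (fun z => In z l)).

Lemma hull_incl S : subset S (hull L S).
Proof. intros a Ha F _ HF. exact (HF a Ha). Qed.

Lemma hull_flat S : flat L (hull L S).
Proof.
  intros l Hl x y Hxy Hlx Hly Hx Hy z Hz F HF HSF.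
  exact (HF l Hl x y Hxy Hlx Hly (Hx F HF HSF) (Hy F HF HSF) z Hz).
Qed.

Lemma hull_min S A : flat L A -> subset S A -> subset (hull L S) A.
Proof. intros HA HS z Hz. exact (Hz A HA HS). Qed.

Lemma hull_sub S T : subset S (hull L T) -> subset (hull L S) (hull L T).
Proof. apply hull_min, hull_flat. Qed.

Lemma hull_mono S T : subset S T -> subset (hull L S) (hull L T).
Proof. intros HST. apply hull_sub. intros a Ha. apply hull_incl, HST, Ha. Qed.

Lemma span_incl l l' : incl l l' -> subset (span l) (span l').
Proof. intros H. apply hull_mono. exact H. Qed.

Lemma span_cons l x : set_eq (span (x :: l)) (hull L (setU1 (fun z => In z l) x)).
Proof.
  intros z. split; apply hull_mono; intros a; simpl; unfold setU1; intuition.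
Qed.

(* The points lying in the hull of a finite part of [S] form a flat. *)
Lemma hull_finitary S z :
  hull L S z -> exists l, (forall a, In a l -> S a) /\ span l z.
Proof.
  revert z. apply (hull_min S (fun z => exists l, (forall a, In a l -> S a) /\ span l z)).
  - intros l0 Hl0 x y Hxy Hlx Hly [l1 [H1 Hx]] [l2 [H2 Hy]] w Hw.
    exists (l1 ++ l2). split.
    + intros a Ha. apply in_app_or in Ha as [Ha|Ha]; auto.
    + apply (hull_flat _ l0 Hl0 x y Hxy Hlx Hly); [| |exact Hw].
      * revert Hx. apply span_incl, incl_appl, incl_refl.
      * revert Hy. apply span_incl, incl_appr, incl_refl.
  - intros a Ha. exists [a]. split.
    + intros b [<-|[]]. exact Ha.
    + apply hull_incl. left. reflexivity.
Qed.

Lemma hull_setU1_finitary A x y :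
  hull L (setU1 A x) y ->
  exists F, NoDup F /\ (forall a, In a F -> A a) /\ span (x :: F) y.
Proof.
  intros Hy. destruct (hull_finitary _ y Hy) as [l [Hl Hly]].
  set (inA z := if excluded_middle_informative (A z) then true else false).
  set (dec := fun a b : X => excluded_middle_informative (a = b)).
  assert (HF : forall z, In z (nodup dec (filter inA l)) <-> In z l /\ A z).
  { intros z. rewrite nodup_In, filter_In. unfold inA.
    destruct (excluded_middle_informative (A z)); intuition discriminate. }
  exists (nodup dec (filter inA l)). split; [apply NoDup_nodup|split].
  - intros a Ha. apply HF, Ha.
  - revert Hly. apply span_incl. intros a Ha.
    destruct (Hl a Ha) as [HAa| ->]; [right; apply HF; auto|left; reflexivity].
Qed.

Lemma rank_exists S l : subset S (span l) -> exists n, rank_eq L S n.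
Proof.
  intros Hl.
  destruct (least_nat (fun n => exists B, length B = n /\ subset S (span B)))
    as [n [Hn Hleast]]; [eauto|].
  exists n. split; [exact Hn|]. intros B HB. apply Hleast. eauto.
Qed.

Lemma rank_le_of_subset S T s t :
  subset S T -> rank_eq L S s -> rank_eq L T t -> s <= t.
Proof.
  intros HST [_ Hs] [[B [<- HTB]] _]. apply Hs. intros z Hz. apply HTB, HST, Hz.
Qed.

Lemma rank_span_cons_le l x m q :
  rank_eq L (span l) m -> rank_eq L (span (x :: l)) q -> q <= S m.
Proof.
  intros [[B [<- HB]] _] [_ Hq]. apply (Hq (x :: B)).
  apply hull_sub. intros a [<-|Ha].
  - apply hull_incl. left. reflexivity.
  - apply (span_incl B); [apply incl_tl, incl_refl|]. apply HB, hull_incl, Ha.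
Qed.

(** * Ranked implies exchange *)

Definition ranked_at (n : nat) : Prop :=
  forall A B, flat L A -> flat L B -> subset A B ->
    rank_eq L A n -> rank_eq L B n -> set_eq A B.

Lemma exchange_of_ranked l x y :
  (forall m, m <= S (length l) -> ranked_at m) ->
  span (x :: l) y -> ~ span l y -> span (y :: l) x.
Proof.
  intros HR Hy Hny.
  assert (HPR : subset (span l) (span (y :: l))) by apply span_incl, incl_tl, incl_refl.
  assert (HRQ : subset (span (y :: l)) (span (x :: l))).
  { apply hull_sub. intros a [<-|Ha]; [exact Hy|apply hull_incl; right; exact Ha]. }
  destruct (rank_exists (span l) l (fun z Hz => Hz)) as [m Hm].
  destruct (rank_exists (span (y :: l)) (y :: l) (fun z Hz => Hz)) as [r Hr].
  destruct (rank_exists (span (x :: l)) (x :: l) (fun z Hz => Hz)) as [q Hq].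
  assert (Hml : m <= length l) by exact (proj2 Hm l (fun z Hz => Hz)).
  assert (Hqm : q <= S m) by exact (rank_span_cons_le l x m q Hm Hq).
  assert (Hmr : m <= r) by exact (rank_le_of_subset _ _ m r HPR Hm Hr).
  assert (Hrq : r <= q) by exact (rank_le_of_subset _ _ r q HRQ Hr Hq).
  assert (Hrm : r <> m).
  { intros ->. apply Hny.
    apply (HR m ltac:(lia) _ _ (hull_flat _) (hull_flat _) HPR Hm Hr).
    apply hull_incl. left. reflexivity. }
  assert (r = q) as <- by lia.
  apply (HR r ltac:(lia) _ _ (hull_flat _) (hull_flat _) HRQ Hr Hq).
  apply hull_incl. left. reflexivity.
Qed.

Lemma exchange_of_finite_ranked A x y :
  (forall F, NoDup F -> (forall a, In a F -> A a) ->
     forall m, m <= S (length F) -> ranked_at m) ->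
  hull L (setU1 A x) y -> ~ hull L A y -> hull L (setU1 A y) x.
Proof.
  intros HR Hy Hny.
  destruct (hull_setU1_finitary A x y Hy) as [F [HF [HFA HyF]]].
  assert (HFx : span (y :: F) x).
  { apply (exchange_of_ranked F x y (HR F HF HFA) HyF).
    intros HFy. apply Hny. revert HFy. apply hull_mono. exact HFA. }
  revert HFx. apply hull_mono. intros a [<-|Ha]; [right; reflexivity|left; apply HFA, Ha].
Qed.

(** * Exchange implies ranked *)

Definition exchange_below (n : nat) : Prop :=
  forall l x y, length l < n -> span (x :: l) y -> ~ span l y -> span (y :: l) x.

Fixpoint independent_over (E D : list X) : Prop :=
  match D with
  | [] => True
  | d :: D' => ~ span E d /\ independent_over (d :: E) D'
  end.

Lemma independent_over_snoc E D a :
  independent_over E D -> ~ span (D ++ E) a -> independent_over E (D ++ [a]).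
Proof.
  revert E. induction D as [|d D IH]; intros E HI Ha; simpl in *; [tauto|].
  destruct HI as [Hd HI]. split; [exact Hd|]. apply IH; [exact HI|].
  intros HDa. apply Ha. revert HDa. apply hull_mono.
  intros z. rewrite !in_app_iff. simpl. tauto.
Qed.

Lemma split_at_first_dependence E C d :
  span (E ++ C) d -> ~ span E d ->
  exists C1 c C2, C = C1 ++ c :: C2 /\ ~ span (E ++ C1) d /\ span (c :: E ++ C1) d.
Proof.
  revert E. induction C as [|c C IH]; intros E HC HE.
  - rewrite app_nil_r in HC. contradiction.
  - destruct (classic (span (c :: E) d)) as [Hc|Hc].
    + exists [], c, C. rewrite app_nil_r. auto.
    + destruct (IH (E ++ [c])) as [C1 [c' [C2 [-> [Hn Hy]]]]].
      * rewrite <- app_assoc. exact HC.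
      * intros HEc. apply Hc. revert HEc. apply span_incl.
        intros z. rewrite in_app_iff. simpl. tauto.
      * exists (c :: C1), c', C2. rewrite <- app_assoc in Hn, Hy. auto.
Qed.

(* Steinitz exchange: each point of [D] is traded for a point of [C]. *)
Lemma steinitz_exchange n :
  exchange_below n -> forall D E C, independent_over E D ->
  (forall d, In d D -> span (E ++ C) d) -> length E + length C <= n ->
  length D <= length C.
Proof.
  intros Hex D. induction D as [|d D IH]; intros E C HI HD Hlen; simpl; [lia|].
  destruct HI as [Hd HI].
  destruct (split_at_first_dependence E C d (HD d (or_introl eq_refl)) Hd)
    as [C1 [c [C2 [-> [Hn Hc]]]]].
  rewrite length_app in Hlen. simpl in Hlen.
  assert (Hcd : span (d :: E ++ C1) c).
  { apply Hex; auto. rewrite length_app. lia. }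
  assert (HDC : length D <= length (C1 ++ C2)).
  { apply (IH (d :: E)); [exact HI| |simpl; rewrite !length_app; lia].
    intros d' Hd'. apply (hull_sub (fun z => In z (E ++ C1 ++ c :: C2)));
      [|apply HD; right; exact Hd'].
    intros a Ha. rewrite !in_app_iff in Ha. simpl in Ha.
    destruct Ha as [Ha|[Ha|[<-|Ha]]].
    - apply hull_incl. simpl. rewrite !in_app_iff. tauto.
    - apply hull_incl. simpl. rewrite !in_app_iff. tauto.
    - revert Hcd. apply span_incl. intros z. simpl. rewrite !in_app_iff. tauto.
    - apply hull_incl. simpl. rewrite !in_app_iff. tauto. }
  rewrite !length_app in *. simpl. lia.
Qed.

Lemma ranked_of_exchange_below n : exchange_below n -> ranked_at n.
Proof.
  intros Hex A B HA HB HAB HrA [[C [HC HBC]] _].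
  assert (Hst : forall D, independent_over [] D -> (forall d, In d D -> B d) -> length D <= n).
  { intros D HI HD. rewrite <- HC.
    apply (steinitz_exchange n Hex D [] C HI); [|simpl; lia].
    intros d Hd. apply HBC, HD, Hd. }
  destruct (greatest_nat
              (fun k => exists D, independent_over [] D /\
                                  (forall d, In d D -> A d) /\ length D = k) n)
    as [k [[D [HI [HDA <-]]] Hmax]].
  { exists 0, []. simpl. repeat split. intros d []. }
  { intros k [D [HI [HDA <-]]]. apply Hst; auto. }
  assert (Hextend : forall a, independent_over [] (D ++ [a]) ->
                      (forall d, In d (D ++ [a]) -> A d) -> False).
  { intros a HIa HAa.
    specialize (Hmax _ (ex_intro _ (D ++ [a]) (conj HIa (conj HAa eq_refl)))).
    rewrite length_app in Hmax. simpl in Hmax. lia. }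
  assert (HAD : subset A (span D)).
  { intros a Ha. apply NNPP. intros Hna. apply (Hextend a).
    - apply independent_over_snoc; [exact HI|]. rewrite app_nil_r. exact Hna.
    - intros d Hd. apply in_app_or in Hd as [Hd|[<-|[]]]; auto. }
  assert (Hn : n <= length D) by exact (proj2 HrA D HAD).
  intros b. split; [apply HAB|]. intros Hb. apply NNPP. intros Hnb.
  assert (HDb : length (D ++ [b]) <= n).
  { apply Hst.
    - apply independent_over_snoc; [exact HI|]. rewrite app_nil_r.
      intros Hh. exact (Hnb (hull_min _ _ HA HDA b Hh)).
    - intros d Hd. apply in_app_or in Hd as [Hd|[<-|[]]]; auto. }
  rewrite length_app in HDb. simpl in HDb. lia.
Qed.

Lemma exchange_below_of_kappa_exchange K n :
  kappa_exchange L K -> nat_le_card n K -> exchange_below n.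
Proof.
  intros HE HK l x y Hl Hy Hny. apply span_cons.
  apply HE; [exact (card_lt_list l n HK Hl)|apply span_cons, Hy|exact Hny].
Qed.

Lemma exchange_below_of_exchange n : exchange L -> exchange_below n.
Proof.
  intros HE l x y _ Hy Hny.
  assert (Hx : ~ span l x).
  { intros Hx. apply Hny. revert Hy. apply hull_sub.
    intros a [<-|Ha]; [exact Hx|apply hull_incl, Ha]. }
  assert (Hyx : hull L (setU1 (span l) y) x).
  { apply HE; [apply hull_flat|exact Hx| |exact Hny]. revert Hy. apply hull_mono.
    intros a [<-|Ha]; [right; reflexivity|left; apply hull_incl, Ha]. }
  revert Hyx. apply hull_sub. intros a [Ha| ->].
  - revert Ha. apply span_incl, incl_tl, incl_refl.
  - apply hull_incl. left. reflexivity.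
Qed.

End Liner.

Theorem theorem2p3p5 (X : Type) (L : (X -> Prop) -> Prop) (HL : is_liner L)
  (K : Type) :
  (kappa_ranked L K <-> kappa_exchange L K) /\ (ranked L <-> exchange L).
Proof.
  split; split.
  - intros HR A x y HA. apply exchange_of_finite_ranked.
    intros F HF HFA m Hm B C HB HC HBC HrB HrC. apply (HR B C m HB HC HBC HrB HrC).
    exact (nat_le_card_mono K m _ Hm (nat_le_card_of_card_lt A F HA HF HFA)).
  - intros HE A B n HA HB HAB HrA HrB Hn.
    exact (ranked_of_exchange_below L n (exchange_below_of_kappa_exchange L K n HE Hn)
             A B HA HB HAB HrA HrB).
  - intros HR A x y HA _ Hy HyA. apply exchange_of_finite_ranked; [|exact Hy|].
    + intros F _ _ m _ B C. exact (HR B C m).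
    + intros HAy. exact (HyA (hull_min L A A HA (fun a Ha => Ha) y HAy)).
  - intros HE A B n.
    exact (ranked_of_exchange_below L n (exchange_below_of_exchange L n HE) A B).
Qed.
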